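(* Let $\Lambda$ be a torsion-free group generated by elements $f,g,h$ with $[f,h]\ne1$ and $[f,g]=1$, and let $G=\langle g,h\rangle\le\Lambda$. Suppose $G$ is non-trivial, $g\ne1$, $h\ne1$, and that if $G$ is cyclic then $g=h^n$ for some $n\in\mathbb{Z}$ with $|n|>1$. Then there exists a finitely generated torsion-free group $\Gamma$ such that: (1) $G$ embeds as a subgroup of $\Gamma$ (we identify $g,h$ with their images); (2) there exist distinct elements $a,b\in\Gamma\setminus\{1\}$ centralizing $g$; (3) the commutator $[a,[b,h]]$ is non-trivial and centralizes $g$.
   Context: $[x,y]$ denotes the group commutator. *)

From Stdlib Require Import ZArith List.
Set Implicit Arguments.

Record group := Group {
  gcar :> Type;
  gmul : gcar -> gcar -> gcar;
  gone : gcar;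
  ginv : gcar -> gcar;
  gmulA : forall x y z, gmul x (gmul y z) = gmul (gmul x y) z;
  gmul1g : forall x, gmul gone x = x;
  gmulVg : forall x, gmul (ginv x) x = gone
}.

Arguments gmul {g}.
Arguments gone {g}.
Arguments ginv {g}.

Section GroupDefs.
Variable G : group.

Fixpoint gpow (x : G) (n : nat) : G :=
  match n with O => gone | S m => gmul x (gpow x m) end.

Definition gpowz (x : G) (n : Z) : G :=
  match n with
  | Z0 => gone
  | Zpos p => gpow x (Pos.to_nat p)
  | Zneg p => ginv (gpow x (Pos.to_nat p))
  end.

Definition comm (x y : G) : G := gmul (gmul (ginv x) (ginv y)) (gmul x y).

Definition commute (x y : G) : Prop := gmul x y = gmul y x.

Definition torsion_free : Prop :=
  forall (x : G) (n : nat), (0 < n)%nat -> gpow x n = gone -> x = gone.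

Inductive gen (S : G -> Prop) : G -> Prop :=
  | gen_in : forall x, S x -> gen S x
  | gen_one : gen S gone
  | gen_inv : forall x, gen S x -> gen S (ginv x)
  | gen_mul : forall x y, gen S x -> gen S y -> gen S (gmul x y).

Definition finitely_generated : Prop :=
  exists s : list G, forall x : G, gen (fun y => In y s) x.

Definition cyclic_subgroup (H : G -> Prop) : Prop :=
  exists c : G, H c /\ forall x : G, H x <-> exists n : Z, x = gpowz c n.

End GroupDefs.

Arguments gen {G}.
Arguments gpow {G}.
Arguments gpowz {G}.
Arguments comm {G}.
Arguments commute {G}.
Arguments cyclic_subgroup {G}.

Definition embeds_on {A B : group} (H : A -> Prop) (phi : A -> B) : Prop :=
  (forall x y, H x -> H y -> phi (gmul x y) = gmul (phi x) (phi y)) /\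
  (forall x y, H x -> H y -> phi x = phi y -> x = y).

(* Embed L in the unrestricted wreath product L^L ⋊ L.  For C = <g>, let a and b
   be the functions equal to h and f on C and to 1 off C; being invariant under right
   translation by g, they commute with g.  Torsion-freeness and the hypothesis on the
   cyclic case give h ∉ C, so [b, h] equals f^-1 on C, and [a, [b, h]] is the function
   equal to [h, f^-1] ≠ 1 on C and to 1 off C, again g-invariant.  Take
   Γ = <g, h, a, b>, torsion-free because the wreath product is. *)

From Stdlib Require Import ZArith List Lia.
From Stdlib Require Import FunctionalExtensionality ProofIrrelevance ClassicalEpsilon.
Import ListNotations.
Set Implicit Arguments.

Arguments gmulA {g}. Arguments gmul1g {g}. Arguments gmulVg {g}.

Section GroupFacts.
Variable G : group.
Implicit Types x y : G.

Lemma mulgV x : gmul x (ginv x) = gone.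
Proof.
  rewrite <- (gmul1g (gmul x (ginv x))), <- (gmulVg (ginv x)) at 1.
  rewrite <- gmulA, (gmulA (ginv x) x), gmulVg, gmul1g.
  apply gmulVg.
Qed.

Lemma mulg1 x : gmul x gone = x.
Proof. rewrite <- (gmulVg x), gmulA, mulgV, gmul1g. reflexivity. Qed.

Lemma mulg_eq1 x y : gmul x y = gone -> x = ginv y.
Proof. intro E. rewrite <- (mulg1 x), <- (mulgV y), gmulA, E, gmul1g. reflexivity. Qed.

Lemma mulg_idem x : gmul x x = x -> x = gone.
Proof.
  intro E. assert (E' : gmul (ginv x) (gmul x x) = gmul (ginv x) x) by (rewrite E; reflexivity).
  rewrite gmulA, !gmulVg, gmul1g in E'. exact E'.
Qed.

Lemma invgK x : ginv (ginv x) = x.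
Proof. symmetry. apply mulg_eq1, mulgV. Qed.

Lemma inv1 : ginv (@gone G) = gone.
Proof. symmetry. apply mulg_eq1, mulg1. Qed.

Lemma invMg x y : ginv (gmul x y) = gmul (ginv y) (ginv x).
Proof.
  symmetry. apply mulg_eq1.
  rewrite <- gmulA, (gmulA (ginv x) x), gmulVg, gmul1g. apply gmulVg.
Qed.

Lemma comm_eq1 x y : comm x y = gone <-> commute x y.
Proof.
  unfold comm, commute. split; intro E.
  - apply mulg_eq1, (f_equal ginv) in E. rewrite invMg, !invgK in E. symmetry. exact E.
  - rewrite E, <- gmulA, (gmulA (ginv y) y), gmulVg, gmul1g. apply gmulVg.
Qed.

Lemma commuteV x y : commute x y -> commute x (ginv y).
Proof.
  unfold commute. intro E.
  assert (E' : gmul (ginv y) (gmul (gmul x y) (ginv y)) = gmul (ginv y) (gmul (gmul y x) (ginv y)))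
    by (rewrite E; reflexivity).
  rewrite <- !gmulA, mulgV, mulg1, !gmulA, gmulVg, gmul1g in E'. symmetry. exact E'.
Qed.

Lemma comm1g y : comm gone y = gone.
Proof. apply comm_eq1. unfold commute. rewrite gmul1g, mulg1. reflexivity. Qed.

Lemma commg1 x : comm x gone = gone.
Proof. apply comm_eq1. unfold commute. rewrite gmul1g, mulg1. reflexivity. Qed.

Lemma commgg x : comm x x = gone.
Proof. apply comm_eq1. reflexivity. Qed.

End GroupFacts.

Section Powers.
Variable G : group.
Implicit Types x : G.

Lemma gpowSr x n : gpow x (S n) = gmul (gpow x n) x.
Proof.
  induction n as [|n IH]; simpl in *.
  - rewrite mulg1, gmul1g. reflexivity.
  - rewrite IH, gmulA, IH. reflexivity.
Qed.

Lemma gpowzS x k : gpowz x (Z.succ k) = gmul (gpowz x k) x.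
Proof.
  destruct k as [|p|p]; simpl.
  - rewrite mulg1, gmul1g. reflexivity.
  - rewrite Pos.add_1_r, Pos2Nat.inj_succ, gpowSr. reflexivity.
  - destruct (Pos.succ_pred_or p) as [->|Hp].
    + simpl. rewrite mulg1, gmulVg. reflexivity.
    + rewrite <- Hp.
      change (Z.pos_sub 1 (Pos.succ (Pos.pred p))) with (Z.succ (Zneg (Pos.succ (Pos.pred p)))).
      replace (Z.succ (Zneg (Pos.succ (Pos.pred p)))) with (Zneg (Pos.pred p)) by lia.
      simpl. rewrite Pos2Nat.inj_succ. simpl.
      rewrite invMg, <- gmulA, gmulVg, mulg1. reflexivity.
Qed.

Lemma gpowzP x k : gpowz x (Z.pred k) = gmul (gpowz x k) (ginv x).
Proof.
  rewrite <- (Z.succ_pred k) at 2. rewrite gpowzS, <- gmulA, mulgV, mulg1. reflexivity.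
Qed.

Lemma gpowzD x j k : gpowz x (j + k) = gmul (gpowz x j) (gpowz x k).
Proof.
  revert j. induction k as [|k IH|k IH] using Z.peano_ind; intro j.
  - rewrite Z.add_0_r. simpl. rewrite mulg1. reflexivity.
  - rewrite Z.add_succ_r, !gpowzS, IH, gmulA. reflexivity.
  - rewrite Z.add_pred_r, !gpowzP, IH, gmulA. reflexivity.
Qed.

Lemma gpowzN x k : gpowz x (- k) = ginv (gpowz x k).
Proof. apply mulg_eq1. rewrite <- gpowzD, Z.add_opp_diag_l. reflexivity. Qed.

Lemma gpowzM x j k : gpowz (gpowz x j) k = gpowz x (j * k).
Proof.
  induction k as [|k IH|k IH] using Z.peano_ind.
  - rewrite Z.mul_0_r. reflexivity.
  - rewrite gpowzS, IH, <- gpowzD, Z.mul_succ_r. reflexivity.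
  - rewrite gpowzP, IH, <- gpowzN, <- gpowzD, Z.mul_pred_r. reflexivity.
Qed.

Lemma gpowz1 x : gpowz x 1 = x.
Proof. apply mulg1. Qed.

Lemma gpowz_fixed x k : torsion_free G -> k <> 1%Z -> gpowz x k = x -> x = gone.
Proof.
  intros T Hk E.
  assert (E1 : gpowz x (k - 1) = gone).
  { rewrite Z.sub_1_r, gpowzP, E. apply mulgV. }
  destruct (k - 1)%Z as [|p|p] eqn:Ek; [lia| |].
  - exact (T x (Pos.to_nat p) ltac:(lia) E1).
  - apply (T x (Pos.to_nat p)); [lia|].
    rewrite <- (invgK _ (gpow x _)). simpl in E1. rewrite E1. apply inv1.
Qed.

Lemma gen_cycle x y : gen (fun z => z = x) y <-> exists k, y = gpowz x k.
Proof.
  split.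
  - induction 1 as [y ->| |y _ [k ->]|y z _ [j ->] _ [k ->]].
    + exists 1%Z. symmetry. apply gpowz1.
    + exists 0%Z. reflexivity.
    + exists (- k)%Z. symmetry. apply gpowzN.
    + exists (j + k)%Z. symmetry. apply gpowzD.
  - intros [k ->].
    assert (Hn : forall n, gen (fun z => z = x) (gpow x n)).
    { induction n; simpl; [apply gen_one | apply gen_mul; [apply gen_in|]; auto]. }
    destruct k; simpl; [apply gen_one | apply Hn | apply gen_inv, Hn].
Qed.

End Powers.

Section MorphismOnGen.
Variables A B : group.
Variable S : A -> Prop.
Variable m : A -> B.
Hypothesis m_mul : forall x y, gen S x -> gen S y -> m (gmul x y) = gmul (m x) (m y).

Lemma morph1_on : m gone = gone.
Proof. apply mulg_idem. rewrite <- m_mul by apply gen_one. rewrite gmul1g. reflexivity. Qed.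

Lemma morphV_on x : gen S x -> m (ginv x) = ginv (m x).
Proof.
  intro Sx. apply mulg_eq1.
  rewrite <- m_mul by (try apply gen_inv; exact Sx). rewrite gmulVg. apply morph1_on.
Qed.

Lemma gen_morph_on (T : B -> Prop) :
  (forall x, S x -> gen T (m x)) -> forall x, gen S x -> gen T (m x).
Proof.
  intros HT x Sx. induction Sx as [x Sx| |x Sx IH|x y Sx IHx Sy IHy].
  - exact (HT x Sx).
  - rewrite morph1_on. apply gen_one.
  - rewrite morphV_on by exact Sx. apply gen_inv, IH.
  - rewrite m_mul by assumption. apply gen_mul; assumption.
Qed.

End MorphismOnGen.

Lemma gen_sub (A : group) (S T : A -> Prop) :
  (forall x, S x -> gen T x) -> forall x, gen S x -> gen T x.
Proof. apply (@gen_morph_on A A S (fun x => x)). reflexivity. Qed.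

Definition commutator_witnesses {G : group} (x y a b : G) : Prop :=
  a <> b /\ a <> gone /\ b <> gone /\
  commute a x /\ commute b x /\
  comm a (comm b y) <> gone /\
  commute (comm a (comm b y)) x.

Section GeneratedSubgroup.
Variable A : group.
Variable S : A -> Prop.

Definition gen_car : Type := {x : A | gen S x}.

Definition gval (u : gen_car) : A := proj1_sig u.

Lemma gval_inj (u v : gen_car) : gval u = gval v -> u = v.
Proof.
  destruct u as [x Sx], v as [y Sy]; simpl. intros <-. f_equal. apply proof_irrelevance.
Qed.

Definition gen_mulg (u v : gen_car) : gen_car :=
  exist _ (gmul (gval u) (gval v)) (gen_mul (proj2_sig u) (proj2_sig v)).
Definition gen_oneg : gen_car := exist _ gone (gen_one A S).
Definition gen_invg (u : gen_car) : gen_car := exist _ (ginv (gval u)) (gen_inv (proj2_sig u)).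

Lemma gen_mulgA u v w : gen_mulg u (gen_mulg v w) = gen_mulg (gen_mulg u v) w.
Proof. apply gval_inj, gmulA. Qed.

Lemma gen_mul1g u : gen_mulg gen_oneg u = u.
Proof. apply gval_inj, gmul1g. Qed.

Lemma gen_mulVg u : gen_mulg (gen_invg u) u = gen_oneg.
Proof. apply gval_inj, gmulVg. Qed.

Definition gen_group : group := Group gen_mulg gen_invg gen_mulgA gen_mul1g gen_mulVg.

Definition gen_insub (x : A) : gen_group :=
  match excluded_middle_informative (gen S x) with
  | left Sx => exist _ x Sx
  | right _ => gone
  end.

Lemma gval_insub x : gen S x -> gval (gen_insub x) = x.
Proof. unfold gen_insub. destruct (excluded_middle_informative (gen S x)); tauto. Qed.

Lemma gen_insubK (u : gen_group) : gen_insub (gval u) = u.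
Proof. apply gval_inj, gval_insub. exact (proj2_sig u). Qed.

Lemma gval_mul (u v : gen_group) : gval (gmul u v) = gmul (gval u) (gval v).
Proof. reflexivity. Qed.

Lemma gval_pow (u : gen_group) n : gval (gpow u n) = gpow (gval u) n.
Proof. induction n as [|n IH]; simpl; [|rewrite <- IH]; reflexivity. Qed.

Lemma gen_insub_mul x y : gen S x -> gen S y ->
  gen_insub (gmul x y) = gmul (gen_insub x) (gen_insub y).
Proof.
  intros Sx Sy. apply gval_inj.
  rewrite gval_mul, !gval_insub by (try apply gen_mul; assumption). reflexivity.
Qed.

Lemma gen_group_torsion_free : torsion_free A -> torsion_free gen_group.
Proof.
  intros T u n Hn E. apply gval_inj, (T _ n Hn). rewrite <- gval_pow, E. reflexivity.
Qed.

Lemma gen_group_finitely_generated (s : list A) :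
  (forall x, S x -> In x s) -> finitely_generated gen_group.
Proof.
  intro Ss. exists (map gen_insub s). intro u. rewrite <- gen_insubK.
  apply (@gen_morph_on A gen_group S gen_insub gen_insub_mul).
  - intros x Sx. apply gen_in, in_map, Ss, Sx.
  - exact (proj2_sig u).
Qed.

Lemma commutator_witnesses_gval (x y a b : gen_group) :
  commutator_witnesses (gval x) (gval y) (gval a) (gval b) ->
  commutator_witnesses x y a b.
Proof.
  unfold commutator_witnesses, commute.
  intros (Hab & Ha & Hb & Hax & Hbx & Hc & Hcx).
  repeat split; try (intro E; apply (f_equal gval) in E; contradiction);
    apply gval_inj; assumption.
Qed.

End GeneratedSubgroup.

Arguments gen_group {A}.
Arguments gval {A S}.
Arguments gen_insub {A} S.

Section Wreath.
Variable L : group.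
Implicit Types (u v : L -> L) (x y : L).

Definition wreath_car : Type := ((L -> L) * L)%type.

(* The top group acts on the base L^L by right translation of the argument. *)
Definition wreath_mul (a b : wreath_car) : wreath_car :=
  (fun l => gmul (fst a l) (fst b (gmul l (snd a))), gmul (snd a) (snd b)).
Definition wreath_one : wreath_car := (fun _ => gone, gone).
Definition wreath_inv (a : wreath_car) : wreath_car :=
  (fun l => ginv (fst a (gmul l (ginv (snd a)))), ginv (snd a)).

Lemma wreath_eq (a b : wreath_car) : (forall l, fst a l = fst b l) -> snd a = snd b -> a = b.
Proof.
  destruct a as [u x], b as [v y]; simpl. intros Euv ->.
  f_equal. apply functional_extensionality, Euv.
Qed.

Lemma wreath_mulA a b c : wreath_mul a (wreath_mul b c) = wreath_mul (wreath_mul a b) c.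
Proof. apply wreath_eq; simpl; intros; rewrite ?gmulA; reflexivity. Qed.

Lemma wreath_mul1g a : wreath_mul wreath_one a = a.
Proof. apply wreath_eq; simpl; intros; rewrite ?gmul1g, ?mulg1; reflexivity. Qed.

Lemma wreath_mulVg a : wreath_mul (wreath_inv a) a = wreath_one.
Proof.
  apply wreath_eq; simpl; intros; rewrite <- ?gmulA, ?gmulVg, ?mulg1; reflexivity.
Qed.

Definition wreath : group := Group wreath_mul wreath_inv wreath_mulA wreath_mul1g wreath_mulVg.

Definition base u : wreath := (u, gone).
Definition top x : wreath := (fun _ => gone, x).

Lemma wreath_snd_pow (a : wreath) n : snd (gpow a n) = gpow (snd a) n.
Proof. induction n as [|n IH]; simpl; [|rewrite IH]; reflexivity. Qed.

Lemma base_pow u n l : fst (gpow (base u) n) l = gpow (u l) n.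
Proof. induction n as [|n IH]; simpl; [|rewrite mulg1, IH]; reflexivity. Qed.

Lemma wreath_torsion_free : torsion_free L -> torsion_free wreath.
Proof.
  intros T [u x] n Hn E.
  assert (Ex : x = gone) by (apply (T x n Hn); rewrite <- (wreath_snd_pow (u, x)), E; reflexivity).
  subst x. change (gpow (base u) n = gone) in E.
  apply wreath_eq; [intro l|reflexivity].
  apply (T _ n Hn). rewrite <- (base_pow u), E. reflexivity.
Qed.

Lemma top_mul x y : top (gmul x y) = gmul (top x) (top y).
Proof. apply wreath_eq; simpl; intros; rewrite ?gmul1g; reflexivity. Qed.

Lemma top_inj x y : top x = top y -> x = y.
Proof. intro E. exact (f_equal snd E). Qed.

Lemma comm_base_top u y :
  comm (base u) (top y) = base (fun l => gmul (ginv (u l)) (u (gmul l (ginv y)))).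
Proof.
  apply wreath_eq; simpl; [intro l|]; rewrite !inv1, ?mulg1, ?gmul1g;
    [reflexivity | apply gmulVg].
Qed.

Lemma comm_base_base u v : comm (base u) (base v) = base (fun l => comm (u l) (v l)).
Proof.
  apply wreath_eq; simpl; [intro l|]; rewrite ?inv1, ?mulg1, ?gmul1g; reflexivity.
Qed.

Lemma commute_base_top u y : (forall l, u (gmul l y) = u l) -> commute (base u) (top y).
Proof.
  intro Hu. apply wreath_eq; simpl; [intro l|]; rewrite ?mulg1, ?gmul1g, ?Hu; reflexivity.
Qed.

End Wreath.

Arguments base {L}.
Arguments top {L}.

Lemma embeds_on_gen_insub (A B : group) (S : A -> Prop) (T : B -> Prop) (m : A -> B) :
  (forall x y, m (gmul x y) = gmul (m x) (m y)) ->
  (forall x y, m x = m y -> x = y) ->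
  (forall x, S x -> gen T (m x)) ->
  embeds_on (gen S) (fun x => gen_insub T (m x)).
Proof.
  intros m_mul m_inj ST.
  assert (mST : forall x, gen S x -> gen T (m x))
    by (apply (@gen_morph_on A B S m); auto).
  split.
  - intros x y Sx Sy. rewrite m_mul. apply gen_insub_mul; auto.
  - intros x y Sx Sy E. apply (f_equal gval) in E.
    rewrite !gval_insub in E by auto. auto.
Qed.

Section CosetIndicator.
Variable L : group.
Variable S : L -> Prop.
Implicit Types c d h l : L.

Definition gen_indicator c l : L :=
  if excluded_middle_informative (gen S l) then c else gone.

Lemma gen_indicator_in c l : gen S l -> gen_indicator c l = c.
Proof. unfold gen_indicator. destruct (excluded_middle_informative (gen S l)); tauto. Qed.

Lemma gen_indicator_out c l : ~ gen S l -> gen_indicator c l = gone.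
Proof. unfold gen_indicator. destruct (excluded_middle_informative (gen S l)); tauto. Qed.

Lemma gen_indicator1 c : gen_indicator c gone = c.
Proof. apply gen_indicator_in, gen_one. Qed.

Lemma gen_mulr g l : gen S g -> gen S (gmul l g) <-> gen S l.
Proof.
  intro Sg. split; intro Sl.
  - replace l with (gmul (gmul l g) (ginv g)) by (rewrite <- gmulA, mulgV; apply mulg1).
    apply gen_mul, gen_inv; assumption.
  - apply gen_mul; assumption.
Qed.

Lemma gen_indicator_mulr c g l : gen S g -> gen_indicator c (gmul l g) = gen_indicator c l.
Proof.
  intro Sg. destruct (excluded_middle_informative (gen S l)) as [Sl|Sl].
  - rewrite !gen_indicator_in by (try apply gen_mulr; assumption). reflexivity.
  - rewrite !gen_indicator_out by (try rewrite gen_mulr; assumption). reflexivity.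
Qed.

Lemma gen_mulVr_out h l : ~ gen S h -> gen S l -> ~ gen S (gmul l (ginv h)).
Proof.
  intros Sh Sl Slh. apply Sh.
  replace h with (gmul (ginv (gmul l (ginv h))) l)
    by (rewrite invMg, invgK, <- gmulA, gmulVg; apply mulg1).
  apply gen_mul, Sl. apply gen_inv, Slh.
Qed.

(* On [gen S] the shifted factor is trivial because [l h^-1] leaves [gen S];
   off [gen S] the first argument of the commutator is trivial. *)
Lemma comm_gen_indicator_shift c d h l : ~ gen S h ->
  comm (gen_indicator c l) (gmul (ginv (gen_indicator d l)) (gen_indicator d (gmul l (ginv h))))
  = gen_indicator (comm c (ginv d)) l.
Proof.
  intro Sh. destruct (excluded_middle_informative (gen S l)) as [Sl|Sl].
  - rewrite (gen_indicator_out _ (gen_mulVr_out Sh Sl)), mulg1.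
    rewrite !(gen_indicator_in _ Sl). reflexivity.
  - rewrite !(gen_indicator_out _ Sl). apply comm1g.
Qed.

End CosetIndicator.

Arguments gen_indicator {L}.

Lemma wreath_commutator_witnesses (L : group) (S : L -> Prop) (f g h : L) :
  gen S g -> ~ gen S h -> comm f h <> gone ->
  commutator_witnesses (top g) (top h)
    (base (gen_indicator S h)) (base (gen_indicator S f)).
Proof.
  intros Sg Sh Hfh.
  assert (Hhf : comm h (ginv f) <> gone).
  { rewrite comm_eq1. intro E. apply Hfh, comm_eq1.
    apply commuteV in E. rewrite invgK in E. symmetry. exact E. }
  assert (Habh : comm (base (gen_indicator S h)) (comm (base (gen_indicator S f)) (top h))
                 = base (gen_indicator S (comm h (ginv f)))).
  { rewrite comm_base_top, comm_base_base. f_equal.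
    apply functional_extensionality. intro l. apply comm_gen_indicator_shift, Sh. }
  assert (base_neq : forall c u, c <> u gone -> base (gen_indicator S c) <> base u).
  { intros c u Hcu E. apply (f_equal (fun w => fst w gone)) in E. simpl in E.
    rewrite gen_indicator1 in E. contradiction. }
  assert (base_commute : forall c, commute (base (gen_indicator S c)) (top g))
    by (intro c; apply commute_base_top; intro l; apply gen_indicator_mulr, Sg).
  unfold commutator_witnesses. rewrite Habh.
  repeat split; try apply base_commute; try apply base_neq.
  - rewrite gen_indicator1. intros ->. apply Hfh, commgg.
  - intros ->. apply Hfh, commg1.
  - intros ->. apply Hfh, comm1g.
  - exact Hhf.
Qed.

Lemma notin_cycle (L : group) (g h : L) :
  torsion_free L -> g <> gone ->
  (cyclic_subgroup (gen (fun y => y = g \/ y = h)) ->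
     exists n : Z, g = gpowz h n /\ (1 < Z.abs n)%Z) ->
  ~ gen (fun y => y = g) h.
Proof.
  intros T Hg Hcyc Hh. destruct Hcyc as [n [Egn Hn]].
  - exists g. split; [apply gen_in; left; reflexivity|]. intro x. rewrite <- gen_cycle. split.
    + apply gen_sub. intros y [->| ->]; [apply gen_in; reflexivity | exact Hh].
    + apply gen_sub. intros y ->. apply gen_in. left. reflexivity.
  - apply gen_cycle in Hh as [m ->]. rewrite gpowzM in Egn.
    apply Hg, (gpowz_fixed (k := m * n) T); [|symmetry; exact Egn].
    rewrite Z.mul_comm. intro E. apply Z.eq_mul_1 in E. lia.
Qed.

Theorem lemma3p1 (L : group) (f g h : L) :
  torsion_free L ->
  (forall x : L, gen (fun y => y = f \/ y = g \/ y = h) x) ->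
  comm f h <> gone ->
  comm f g = gone ->
  (exists x : L, gen (fun y => y = g \/ y = h) x /\ x <> gone) ->
  g <> gone -> h <> gone ->
  (cyclic_subgroup (gen (fun y => y = g \/ y = h)) ->
     exists n : Z, g = gpowz h n /\ (1 < Z.abs n)%Z) ->
  exists (Gam : group) (phi : L -> Gam),
    finitely_generated Gam /\ torsion_free Gam /\
    embeds_on (gen (fun y => y = g \/ y = h)) phi /\
    exists a b : Gam,
      a <> b /\ a <> gone /\ b <> gone /\
      commute a (phi g) /\ commute b (phi g) /\
      comm a (comm b (phi h)) <> gone /\
      commute (comm a (comm b (phi h))) (phi g).
Proof.
  intros T _ Hfh _ _ Hg _ Hcyc.
  set (C := fun y : L => y = g).
  set (a := base (gen_indicator C h)).
  set (b := base (gen_indicator C f)).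
  set (s := [top g; top h; a; b]).
  set (Gam := gen_group (fun w => In w s)).
  assert (Hs : forall w, In w s -> gen (fun w => In w s) w) by (intros; apply gen_in; assumption).
  exists Gam, (fun x => gen_insub _ (top x)).
  split; [|split; [|split]].
  - apply gen_group_finitely_generated with s. tauto.
  - apply gen_group_torsion_free, wreath_torsion_free, T.
  - apply embeds_on_gen_insub; [apply top_mul | apply top_inj |].
    intros x [-> | ->]; apply Hs; simpl; tauto.
  - exists (gen_insub _ a), (gen_insub _ b).
    apply commutator_witnesses_gval.
    rewrite !gval_insub by (apply Hs; simpl; tauto).
    apply wreath_commutator_witnesses; [apply gen_in; reflexivity | | exact Hfh].
    exact (notin_cycle T Hg Hcyc).
Qed.
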